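(* Suppose that $\theta(n)=O(n^{\alpha})$ for some $\alpha\in(0,1]$. Then $\theta'(m)=O(m^{\beta})$, where $\beta=\frac{\alpha}{1+\alpha}$.
   Context: An interval colouring of a graph $G$ is a proper edge-colouring $c\colon E(G)\to\mathbb{N}$ such that for every vertex $v$ the set of colours on edges incident to $v$ is a set of consecutive integers. The interval colouring thickness $\theta(G)$ is the minimum number of interval colourable subgraphs into which $E(G)$ can be edge-decomposed. $\theta(n)$ is the maximum of $\theta(G)$ over graphs $G$ on $n$ vertices and $\theta'(m)$ the maximum of $\theta(G)$ over graphs with $m$ edges. *)

From Stdlib Require Import Reals ClassicalDescription ClassicalEpsilon.
From mathcomp Require Import all_boot.
Set Implicit Arguments. Unset Strict Implicit. Unset Printing Implicit Defensive.

Definition simple_graph n (E : {set {set 'I_n}}) : Prop :=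
  forall e, e \in E -> #|e| = 2.

Definition interval_colouring n (F : {set {set 'I_n}}) (c : {set 'I_n} -> nat) : Prop :=
  (forall e f, e \in F -> f \in F -> e != f -> ~~ [disjoint e & f] -> c e <> c f) /\
  (forall (v : 'I_n) (a b k : nat),
      (exists2 e, e \in F & (v \in e) && (c e == a)) ->
      (exists2 e, e \in F & (v \in e) && (c e == b)) ->
      a <= k -> k <= b ->
      exists2 e, e \in F & (v \in e) && (c e == k)).

Definition interval_colourable n (F : {set {set 'I_n}}) : Prop :=
  exists c, interval_colouring F c.

Definition decomposable n (E : {set {set 'I_n}}) (k : nat) : Prop :=
  exists p : {set 'I_n} -> nat,
    (forall e, e \in E -> p e < k) /\
    (forall i, i < k -> interval_colourable [set e in E | p e == i]).

Definition pbool (P : Prop) : bool := if excluded_middle_informative P then true else false.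

(* theta(G) = minimum number of interval colourable subgraphs into which E(G)
   edge-decomposes (the default 0 in the impossible case of no such k). *)
Definition thickness n (E : {set {set 'I_n}}) : nat :=
  match excluded_middle_informative (exists k, pbool (decomposable E k)) with
  | left h => ex_minn h
  | right _ => 0
  end.

Definition theta_n (n : nat) : nat :=
  \max_(E : {set {set 'I_n}} | pbool (simple_graph E)) thickness E.

(* theta'(m) = max of theta(G) over graphs G with m edges (any number of vertices).
   The value set is nonempty and bounded; the fallback 0 is only for definiteness. *)
Definition thetap_val (m k : nat) : Prop :=
  exists n (E : {set {set 'I_n}}), simple_graph E /\ #|E| = m /\ thickness E = k.

Definition theta_m (m : nat) : nat :=
  match excluded_middle_informative
          ((exists k, pbool (thetap_val m k)) /\
           exists B, forall k, pbool (thetap_val m k) -> k <= B) with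
  | left (conj h1 h2) =>
      let (B, hB) := constructive_indefinite_description _ h2 in ex_maxn h1 hB
  | right _ => 0
  end.

From Stdlib Require Import Reals Lra ClassicalDescription ClassicalEpsilon.
From mathcomp Require Import all_boot.
Set Implicit Arguments. Unset Strict Implicit. Unset Printing Implicit Defensive.

(* Let G have m edges and fix a threshold t ~ m^b, b = a/(1+a).
   Call a vertex high if its degree is at least t; by the handshake lemma there
   are at most 2m/t high vertices.
   - The edges with both ends high form a graph on at most 2m/t vertices; after
     relabelling those vertices into 'I_K it has thickness at most theta(K).
   - Every other edge has a low endpoint.  Greedily colour these edges with 2t
     colours so that edges meeting at a low vertex get different colours (each
     such edge conflicts with fewer than 2t others).  Inside one colour class two
     edges can only meet at a high vertex, so the class is a vertex-disjoint
     union of stars, which is interval colourable.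
   Thickness is subadditive over edge partitions, hence
   theta(G) <= theta(2m/t) + 2t <= C (m/t)^a + 2t = O(m^b). *)

Lemma pboolP (P : Prop) : pbool P <-> P.
Proof. by rewrite /pbool; case: excluded_middle_informative. Qed.

(* Every edge in its own part: a trivial decomposition into #|E| parts, which
   shows that the thickness is well defined. *)
Lemma decomposable_card n (E : {set {set 'I_n}}) : decomposable E #|E|.
Proof.
exists (fun e => index e (enum E)); split.
  by move=> e eE; rewrite cardE index_mem mem_enum.
move=> i _; exists (fun _ => 0); split.
  move=> e f; rewrite !inE => /andP[eE /eqP ei] /andP[fE /eqP fi] ef _.
  move: ef; rewrite -(nth_index e (x:=e) (s:=enum E)) ?mem_enum //.
  by rewrite -(nth_index e (x:=f) (s:=enum E)) ?mem_enum // ei fi eqxx.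
move=> v a b k [e eF /andP[ve /eqP <-]] [f _ /andP[_ /eqP <-]] _; rewrite leqn0 => /eqP ->.
by exists e; rewrite ?ve.
Qed.

Lemma thickness_spec n (E : {set {set 'I_n}}) :
  decomposable E (thickness E) /\ forall k, decomposable E k -> thickness E <= k.
Proof.
rewrite /thickness; case: excluded_middle_informative => [h|h]; last first.
  by exfalso; apply: h; exists #|E|; apply/pboolP; apply: decomposable_card.
case: ex_minnP => k /pboolP dk hk; split => // j dj; apply: hk; exact/pboolP.
Qed.

Lemma thickness_decomposable n (E : {set {set 'I_n}}) : decomposable E (thickness E).
Proof. exact: (proj1 (thickness_spec E)). Qed.

Lemma thickness_min n (E : {set {set 'I_n}}) k :
  decomposable E k -> thickness E <= k.
Proof. exact: (proj2 (thickness_spec E)). Qed.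

Lemma decomposable_union n (E A : {set {set 'I_n}}) k1 k2 :
  A \subset E -> decomposable A k1 -> decomposable (E :\: A) k2 ->
  decomposable E (k1 + k2).
Proof.
move=> AE [p1 [p1k p1c]] [p2 [p2k p2c]].
exists (fun e => if e \in A then p1 e else k1 + p2 e); split.
  move=> e eE; case: ifP => eA; first by apply: ltn_addr; apply: p1k.
  by rewrite ltn_add2l; apply: p2k; rewrite inE eA.
move=> i ik; case: (ltnP i k1) => ik1.
  have -> : [set e in E | (if e \in A then p1 e else k1 + p2 e) == i] =
            [set e in A | p1 e == i].
    apply/setP => e; rewrite !inE; case: ifP => eA; first by rewrite (subsetP AE).
    by apply/negbTE/negP => /andP[_ /eqP ei]; move: ik1; rewrite -ei ltnNge leq_addr.
  exact: p1c.
have -> : [set e in E | (if e \in A then p1 e else k1 + p2 e) == i] =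
          [set e in E :\: A | p2 e == i - k1].
  apply/setP => e; rewrite !inE; case: ifP => eA /=.
    by apply/negbTE/negP => /andP[_ /eqP ei]; move: (p1k e eA); rewrite ei ltnNge ik1.
  by congr (_ && _); apply/eqP/eqP => [<-|->]; [rewrite addKn | rewrite subnKC].
by apply: p2c; rewrite ltn_subLR.
Qed.

(* A star forest: every edge e has an optional centre [z e] lying on e, and two
   distinct edges that meet do so at the centre of both.  Numbering the edges of
   each star 0, 1, 2, ... gives an interval colouring. *)
Lemma star_forest_colourable n (F : {set {set 'I_n}}) (z : {set 'I_n} -> option 'I_n) :
  (forall e w, e \in F -> z e = Some w -> w \in e) ->
  (forall e f w, e \in F -> f \in F -> e != f -> w \in e -> w \in f -> z e = Some w) ->
  interval_colourable F.
Proof.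
move=> zin zsh.
pose star o := enum [set f in F | z f == o].
have in_star e w : e \in F -> z e = Some w -> e \in star (Some w).
  by move=> eF ze; rewrite mem_enum inE eF ze eqxx.
exists (fun e => index e (star (z e))); split.
  move=> e f eF fF ef; rewrite -setI_eq0 => /set0Pn [w]; rewrite inE => /andP[we wf].
  have ze := zsh e f w eF fF ef we wf.
  have zf : z f = Some w by apply: (zsh f e w) => //; rewrite eq_sym.
  rewrite ze zf => ei; move/eqP: ef; apply.
  by rewrite -[LHS](nth_index e (in_star e w eF ze)) -[RHS](nth_index e (in_star f w fF zf)) ei.
move=> v a b k [e eF /andP[ve /eqP ea]] [f fF /andP[vf /eqP fb]] ak kb.
case: (eqVneq e f) => [ef|ef].
  subst f; exists e => //; rewrite ve /=; move: fb; rewrite ea => ab; subst b.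
  by apply/eqP/anti_leq; rewrite ak kb.
have zf : z f = Some v by apply: (zsh f e v) => //; rewrite eq_sym.
have kS : k < size (star (Some v)).
  by apply: leq_ltn_trans kb _; rewrite -fb zf index_mem in_star.
set g := nth f (star (Some v)) k.
have : g \in star (Some v) by apply: mem_nth.
rewrite mem_enum inE => /andP[gF /eqP zg].
by exists g => //; rewrite (zin g v gF zg) /= zg /g index_uniq ?enum_uniq.
Qed.

Lemma free_colour (s : seq nat) K : size s < K -> exists2 j, j < K & j \notin s.
Proof.
move=> hs; have /allPn[j] : ~~ all (mem s) (iota 0 K).
  apply/negP => /allP sub; have := uniq_leq_size (iota_uniq 0 K) sub.
  by rewrite size_iota leqNgt hs.
by rewrite mem_iota add0n => /= jK js; exists j.
Qed.

Lemma greedy_colouring (T : finType) (conf : rel T) K (S : {set T}) :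
  symmetric conf ->
  (forall x, x \in S -> #|[set y in S | conf x y]| < K) ->
  exists c : T -> nat, (forall x, x \in S -> c x < K) /\
    (forall x y, x \in S -> y \in S -> x != y -> conf x y -> c x != c y).
Proof.
move=> csym; move: {2}#|S| (erefl #|S|) => n; elim: n S => [|n IH] S hS hK.
  by exists (fun _ => 0); split=> [x|x y]; rewrite (card0_eq hS).
have [x xS] : exists x, x \in S.
  by apply/set0Pn; apply: contraTneq isT => S0; rewrite S0 cards0 in hS.
have conf_sub (A : {set T}) : A \subset S -> #|[set y in A | conf x y]| < K.
  move=> AS; apply: leq_ltn_trans (hK x xS); apply: subset_leq_card.
  by apply/subsetP => y; rewrite !inE => /andP[/(subsetP AS) -> ->].
have [c' [c'K c'p]] : exists c' : T -> nat, (forall y, y \in S :\ x -> c' y < K) /\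
    (forall y w, y \in S :\ x -> w \in S :\ x -> y != w -> conf y w -> c' y != c' w).
  apply: IH; first by move: (cardsD1 x S); rewrite xS hS add1n => -[].
  move=> y; rewrite in_setD1 => /andP[_ yS]; apply: leq_ltn_trans (hK y yS).
  by apply: subset_leq_card; apply/subsetP => z; rewrite !inE => /andP[/andP[_ ->] ->].
set N := [set y in S :\ x | conf x y].
have [j jK jN] : exists2 j, j < K & j \notin [seq c' y | y <- enum N].
  by apply: free_colour; rewrite size_map -cardE conf_sub ?subD1set.
have new_ok y : y \in S -> y != x -> conf x y -> c' y != j.
  move=> yS yx cxy; apply: contraNneq jN => <-.
  by apply: map_f; rewrite mem_enum !inE yx yS cxy.
exists (fun y => if y == x then j else c' y); split.
  by move=> y yS; case: eqP => // /eqP yx; apply: c'K; rewrite in_setD1 yx.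
move=> y w yS wS yw cyw.
case: (eqVneq y x) => [ey|nyx]; case: (eqVneq w x) => [ew|nwx].
- by move: yw; rewrite ey ew eqxx.
- by rewrite eq_sym; apply: new_ok => //; rewrite -ey.
- by apply: new_ok => //; rewrite -ew csym.
- by apply: c'p; rewrite ?in_setD1 ?nyx ?nwx.
Qed.

Definition edge_image n m (g : 'I_n -> 'I_m) (F : {set {set 'I_n}}) :
  {set {set 'I_m}} := (fun e : {set 'I_n} => g @: e) @: F.

Section Relabelling.
Variables (n m : nat) (g : 'I_n -> 'I_m) (H : {set 'I_n}).
Hypothesis g_inj : {in H &, injective g}.

Lemma edge_image_inj (e f : {set 'I_n}) :
  e \subset H -> f \subset H -> g @: e = g @: f -> e = f.
Proof.
have half (e1 e2 : {set 'I_n}) :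
    e1 \subset H -> e2 \subset H -> g @: e1 = g @: e2 -> e1 \subset e2.
  move=> e1H e2H e12; apply/subsetP => x xe1.
  have /imsetP[y ye2 gxy] : g x \in g @: e2 by rewrite -e12; apply: imset_f.
  by have -> := g_inj (subsetP e1H x xe1) (subsetP e2H y ye2) gxy.
move=> eH fH efg; apply/eqP; rewrite eqEsubset.
by rewrite (half e f eH fH efg) (half f e fH eH (esym efg)).
Qed.

Lemma mem_edge_image (e : {set 'I_n}) v :
  e \subset H -> v \in H -> (g v \in g @: e) = (v \in e).
Proof.
move=> eH vH; apply/imsetP/idP => [[y ye gvy]|ve]; last by exists v.
by rewrite (g_inj vH (subsetP eH y ye) gvy).
Qed.

Lemma interval_colourable_pullback (F : {set {set 'I_n}}) :
  (forall e, e \in F -> e \subset H) ->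
  interval_colourable (edge_image g F) -> interval_colourable F.
Proof.
move=> FH [c' [c'p c'i]]; exists (fun e : {set 'I_n} => c' (g @: e)); split.
  move=> e f eF fF ef; rewrite -setI_eq0 => /set0Pn [w]; rewrite inE => /andP[we wf].
  have eF' : g @: e \in edge_image g F by apply: imset_f.
  have fF' : g @: f \in edge_image g F by apply: imset_f.
  apply: c'p => //.
    by apply: contra ef => /eqP/edge_image_inj-> //; apply: FH.
  by rewrite -setI_eq0; apply/set0Pn; exists (g w); rewrite inE !imset_f.
move=> v a b k [e eF /andP[ve ea]] [f fF /andP[vf fb]] ak kb.
have vH : v \in H by apply: (subsetP (FH e eF)).
have image_witness (e1 : {set 'I_n}) c : e1 \in F -> v \in e1 -> c' (g @: e1) == c ->
    exists2 e', e' \in edge_image g F & (g v \in e') && (c' e' == c).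
  by move=> e1F ve1 e1c; exists (g @: e1); [apply: imset_f | rewrite imset_f].
have [e' /imsetP[e0 e0F ->] /andP[ve0 e0k]] :=
  c'i (g v) a b k (image_witness e a eF ve ea) (image_witness f b fF vf fb) ak kb.
by exists e0; rewrite // -(mem_edge_image (FH e0 e0F)) // ve0.
Qed.

Lemma decomposable_pullback (E : {set {set 'I_n}}) k :
  (forall e, e \in E -> e \subset H) ->
  decomposable (edge_image g E) k -> decomposable E k.
Proof.
move=> EH [p' [p'k p'c]]; exists (fun e : {set 'I_n} => p' (g @: e)); split.
  by move=> e eE; apply: p'k; apply: imset_f.
move=> i ik; apply: interval_colourable_pullback.
  by move=> e; rewrite inE => /andP[/EH].
suff -> : edge_image g [set e in E | p' (g @: e) == i] =
          [set e' in edge_image g E | p' e' == i] by apply: p'c.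
apply/setP => e'; rewrite inE; apply/imsetP/andP => [[e]|[/imsetP[e eE ->] ei]].
  by rewrite inE => /andP[eE ei] ->; rewrite imset_f.
by exists e; rewrite ?inE ?eE.
Qed.

End Relabelling.

Lemma thickness_le_theta_n n (E : {set {set 'I_n}}) (H : {set 'I_n}) K :
  simple_graph E -> (forall e, e \in E -> e \subset H) -> #|H| <= K.+1 ->
  thickness E <= theta_n K.+1.
Proof.
move=> sE EH HK.
pose g (v : 'I_n) : 'I_K.+1 := inord (index v (enum H)).
have index_lt v : v \in H -> index v (enum H) < K.+1.
  by move=> vH; apply: leq_trans HK; rewrite cardE index_mem mem_enum.
have g_inj : {in H &, injective g}.
  move=> u v uH vH /(congr1 (@nat_of_ord _)); rewrite !inordK ?index_lt // => uv.
  by rewrite -[u](nth_index u (s := enum H)) ?mem_enum // uv nth_index ?mem_enum.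
have sE' : simple_graph (edge_image g E).
  move=> e' /imsetP [e eE ->]; rewrite card_in_imset ?sE //.
  by move=> x y xe ye; apply: g_inj; apply: (subsetP (EH _ eE)).
apply: leq_trans (thickness_min (decomposable_pullback g_inj EH
  (thickness_decomposable _))) _.
rewrite /theta_n; apply: (@leq_bigmax_cond _ (fun E0 : {set {set 'I_K.+1}} =>
  pbool (simple_graph E0)) (fun E0 => thickness E0) (edge_image g E)).
exact/pboolP.
Qed.

Definition degree n (E : {set {set 'I_n}}) (v : 'I_n) := #|[set e in E | v \in e]|.

Definition high_vertices n (E : {set {set 'I_n}}) t := [set v | t <= degree E v].

Definition high_edges n (E : {set {set 'I_n}}) t :=
  [set e in E | e \subset high_vertices E t].

Lemma mem_pair n (e : {set 'I_n}) w u v :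
  #|e| = 2 -> w \in e -> u \in e -> w != u -> v \in e -> (v == w) || (v == u).
Proof.
move=> e2 we ue wu; suff <- : [set w; u] = e by rewrite !inE.
by apply/eqP; rewrite eqEcard e2 cards2 wu andbT subUset !sub1set we ue.
Qed.

(* The edges with a low endpoint split into 2t star forests: greedily colour
   them so that edges meeting at a low vertex differ (an edge meets fewer than
   2t others there), and centre every edge at its high endpoint, if any. *)
Lemma low_edges_decomposable n (E : {set {set 'I_n}}) t :
  simple_graph E -> 0 < t -> decomposable (E :\: high_edges E t) (2 * t).
Proof.
move=> sE t0; set L := E :\: _.
pose conf (e f : {set 'I_n}) := [exists v, [&& v \in e, v \in f & degree E v < t]].
have csym : symmetric conf.
  by move=> e f; apply/existsP/existsP => -[v /and3P[? ? ?]]; exists v; apply/and3P.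
pose low_star v := if degree E v < t then [set f in E | v \in f] else set0.
have low_star_small v : #|low_star v| <= t.-1.
  rewrite /low_star; case: ifP => [dv|_]; last by rewrite cards0.
  by rewrite -ltnS prednK.
have conf_small e : e \in L -> #|[set f in L | conf e f]| < 2 * t.
  rewrite !inE => /andP[_ eE].
  have [x [y [_ exy]]] := cards2P _ (introT eqP (sE e eE)).
  have sub : [set f in L | conf e f] \subset low_star x :|: low_star y.
    apply/subsetP => f; rewrite !inE => /andP[/andP[_ fE] /existsP [v /and3P[ve vf dv]]].
    by move: ve; rewrite exy !inE => /orP[] /eqP <-; rewrite /low_star dv inE fE vf ?orbT.
  apply: leq_ltn_trans (subset_leq_card sub) _.
  apply: leq_ltn_trans (leq_card_setU _ _) _.
  apply: leq_ltn_trans (leq_add (low_star_small x) (low_star_small y)) _.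
  by rewrite mul2n -addnn -(prednK t0) addSn ltnS addnS leqnSn.
have [col [colK colp]] := greedy_colouring csym conf_small.
exists col; split => // i _.
apply: (@star_forest_colourable _ _ (fun e => [pick v in e | t <= degree E v])).
  by move=> e w _; case: pickP => // v /andP[ve _] [<-].
move=> e f w; rewrite !inE => /andP[/andP[eH eE] ei] /andP[/andP[fH fE] fi] ef we wf.
have hw : t <= degree E w.
  rewrite leqNgt; apply/negP => dw.
  have : col e != col f.
    by apply: colp; rewrite ?inE ?eH ?fH ?eE ?fE //; apply/existsP; exists w; rewrite we wf dw.
  by rewrite (eqP ei) (eqP fi) eqxx.
move: eH; rewrite eE /= => /subsetPn [u ue]; rewrite inE -ltnNge => du.
have wu : w != u by apply: contraTneq hw => ->; rewrite -ltnNge.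
case: pickP => [v /andP[ve hv]|none]; last by move: (none w); rewrite we hw.
case/orP: (mem_pair (sE e eE) we ue wu ve) => /eqP vwu; first by rewrite vwu.
by move: hv; rewrite vwu leqNgt du.
Qed.

Lemma handshake n (E : {set {set 'I_n}}) t :
  simple_graph E -> t * #|high_vertices E t| <= 2 * #|E|.
Proof.
move=> sE.
have card_sum (T : finType) (A : {pred T}) : #|A| = \sum_(x : T) (x \in A : nat).
  by rewrite -sum1_card big_mkcond /=; apply: eq_bigr => x _; case: (x \in A).
have degree_sum : \sum_(v : 'I_n) degree E v = 2 * #|E|.
  transitivity (\sum_(e in E) #|e|); last first.
    by rewrite -sum1_card big_distrr /=; apply: eq_bigr => e eE; rewrite sE // muln1.
  transitivity (\sum_(v : 'I_n) \sum_(e in E) (v \in e : nat)).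
    apply: eq_bigr => v _; rewrite /degree card_sum [RHS]big_mkcond /=.
    by apply: eq_bigr => e _; rewrite inE; case: (e \in E).
  by rewrite exchange_big /=; apply: eq_bigr => e _; rewrite card_sum.
rewrite -degree_sum mulnC -sum_nat_const.
apply: leq_trans (_ : \sum_(v in high_vertices E t) degree E v <= _).
  by apply: leq_sum => v; rewrite inE.
by rewrite [X in _ <= X](bigID (mem (high_vertices E t))) /= leq_addr.
Qed.

(* Combinatorial core: with h = #|high vertices|, t * h <= 2|E| and
   theta(G) <= theta(max h N + 1) + 2t; the parameter N only enlarges the
   vertex count so that the hypothesis on theta_n applies. *)
Lemma thickness_split n (E : {set {set 'I_n}}) t N : simple_graph E -> 0 < t ->
  exists h, t * h <= 2 * #|E| /\ thickness E <= theta_n (maxn h N).+1 + 2 * t.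
Proof.
move=> sE t0; exists #|high_vertices E t|; split; first exact: handshake.
have EH_sub : high_edges E t \subset E by apply/subsetP => e; rewrite inE => /andP[].
have sEH : simple_graph (high_edges E t) by move=> e /(subsetP EH_sub)/sE.
have high_theta : thickness (high_edges E t) <= theta_n (maxn #|high_vertices E t| N).+1.
  apply: (@thickness_le_theta_n _ _ (high_vertices E t)) sEH _ (leqW (leq_maxl _ _)).
  by move=> e; rewrite inE => /andP[].
apply: leq_trans (thickness_min (decomposable_union EH_sub
  (thickness_decomposable _) (low_edges_decomposable sE t0))) _.
by rewrite leq_add2r.
Qed.

Lemma theta_m_ind m (P : nat -> Prop) :
  (forall k, thetap_val m k -> P k) -> P 0 -> P (theta_m m).
Proof.
move=> hP h0; rewrite /theta_m; case: excluded_middle_informative => [[h1 h2]|] //.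
case: constructive_indefinite_description => B hB.
by case: ex_maxnP => k /pboolP hk _; apply: hP.
Qed.

Section Balancing.
Local Open Scope R_scope.

Lemma INR_leq (a b : nat) : (a <= b)%N -> INR a <= INR b.
Proof. by move/leP; apply: le_INR. Qed.

Lemma nat_round_up (X : R) : 0 <= X -> exists t : nat, X <= INR t <= X + 1.
Proof.
move=> X0; exists (Z.to_nat (up X)); have [u1 u2] := archimed X.
have up0 : (0 <= up X)%Z by apply: le_IZR; lra.
rewrite INR_IZR_INZ Znat.Z2Nat.id //; lra.
Qed.

Lemma Rpower_ge1 x y : 1 <= x -> 0 <= y -> 1 <= Rpower x y.
Proof. by move=> x1 y0; rewrite -(Rpower_O x); [apply: Rle_Rpower | lra]. Qed.

(* The exponent arithmetic behind the choice t ~ x^b with b = a/(1+a):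
   x = x^b * x^(1-b) and (x^(1-b))^a = x^b, since (1-b)a = b. *)
Lemma exponent_balance x alpha : 0 < x -> 0 < alpha ->
  Rpower x (alpha / (1 + alpha)) * Rpower x (1 - alpha / (1 + alpha)) = x /\
  Rpower (Rpower x (1 - alpha / (1 + alpha))) alpha = Rpower x (alpha / (1 + alpha)).
Proof.
move=> x0 a0; split; first by rewrite -Rpower_plus Rplus_minus Rpower_1.
by rewrite Rpower_mult; congr Rpower; field; lra.
Qed.

Lemma theta_n_at_bounded_size alpha C N (K : nat) X Y : 0 < alpha ->
  (forall k : nat, (N <= k)%N -> INR (theta_n k) <= C * Rpower (INR k) alpha) ->
  (N <= K)%N -> (0 < K)%N -> 0 < Y -> INR K <= (INR N + 3) * Y ->
  Rpower Y alpha = X ->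
  INR (theta_n K) <= Rabs C * (Rpower (INR N + 3) alpha * X).
Proof.
move=> a0 hC NK K0 Y0 KY YX.
have N3 : 0 < INR N + 3 by have := pos_INR N; lra.
have powK : Rpower (INR K) alpha <= Rpower (INR N + 3) alpha * X.
  have K0' : 0 < INR K by apply: lt_0_INR; apply/ltP.
  apply: Rle_trans (Rle_Rpower_l _ _ alpha (Rlt_le _ _ a0) (conj K0' KY)) _.
  by rewrite -Rpower_mult_distr // YX; apply: Rle_refl.
apply: Rle_trans (hC K NK) _; apply: Rle_trans (Rle_abs _) _.
rewrite Rabs_mult (Rabs_right (Rpower _ _)); last by apply/Rle_ge/Rlt_le/exp_pos.
by apply: Rmult_le_compat_l => //; apply: Rabs_pos.
Qed.

(* The quantitative form of the theorem for a single graph with m >= 1 edges,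
   assuming theta(n) <= C n^a for n >= N: choose t = ceil(m^b) in
   [thickness_split]; then max h N + 1 <= (N + 3) m^(1-b), so
   theta(max h N + 1) <= |C| (N+3)^a m^b, while 2t <= 4 m^b. *)
Lemma thickness_growth alpha C N n (E : {set {set 'I_n}}) : 0 < alpha ->
  (forall k : nat, (N <= k)%N -> INR (theta_n k) <= C * Rpower (INR k) alpha) ->
  simple_graph E -> (1 <= #|E|)%N ->
  INR (thickness E) <=
    (Rabs C * Rpower (INR N + 3) alpha + 4) * Rpower (INR #|E|) (alpha / (1 + alpha)).
Proof.
move=> a0 hC sE E1.
have x1 : 1 <= INR #|E| by apply: INR_leq E1.
set x := INR #|E| in x1 *; set b := alpha / (1 + alpha).
have b0 : 0 <= b by apply: Rle_mult_inv_pos; lra.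
have b1 : 0 <= 1 - b.
  have -> : 1 - b = / (1 + alpha) by rewrite /b; field; lra.
  by apply/Rlt_le/Rinv_0_lt_compat; lra.
have [XY YX] := exponent_balance (Rlt_le_trans 0 1 x Rlt_0_1 x1) a0.
rewrite -/b in XY YX; set X := Rpower x b in XY YX *; set Y := Rpower x (1 - b) in XY YX.
have X1 : 1 <= X by apply: Rpower_ge1.
have Y1 : 1 <= Y by apply: Rpower_ge1.
have [t [tX tX1]] := nat_round_up (Rle_trans 0 1 X Rle_0_1 X1).
have t0 : (0 < t)%N by apply/ltP; apply: INR_lt; rewrite /=; lra.
have [h [th hk]] := thickness_split N sE t0.
have hY : INR h <= 2 * Y.
  have := INR_leq th; rewrite !mult_INR -/x /= => th'.
  apply: (Rmult_le_reg_l X); first lra.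
  by have := pos_INR h; nra.
have KY : INR (maxn h N).+1 <= (INR N + 3) * Y.
  have : ((maxn h N).+1 <= h + N + 1)%N by rewrite addn1 ltnS geq_max leq_addr leq_addl.
  move/INR_leq; rewrite !plus_INR /= => KhN.
  by have := pos_INR N; nra.
have := theta_n_at_bounded_size a0 hC (leqW (leq_maxr h N)) (ltn0Sn _)
  (Rlt_le_trans 0 1 Y Rlt_0_1 Y1) KY YX.
have := INR_leq hk; rewrite plus_INR mult_INR /=.
have := Rabs_pos C; have : 0 < Rpower (INR N + 3) alpha by apply: exp_pos.
nra.
Qed.

End Balancing.

(* The main theorem. *)
Theorem lemma7 (alpha : R) :
  Rlt 0 alpha -> Rle alpha 1 ->
  (exists (C : R) (N : nat), forall n : nat, (N <= n)%N ->
      Rle (INR (theta_n n)) (Rmult C (Rpower (INR n) alpha))) ->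
  (exists (C : R) (M : nat), forall m : nat, (M <= m)%N ->
      Rle (INR (theta_m m))
          (Rmult C (Rpower (INR m) (Rdiv alpha (Rplus 1 alpha))))).
Proof.
Local Open Scope R_scope.
move=> a0 _ [C [N hC]].
pose c := Rabs C * Rpower (INR N + 3) alpha + 4.
have c_pos : 0 <= c.
  have := Rabs_pos C; have := exp_pos (alpha * ln (INR N + 3)).
  rewrite /c /Rpower; nra.
exists c, 1%N => m m1.
apply: (@theta_m_ind m (fun k => INR k <= c * Rpower (INR m) (alpha / (1 + alpha))))
  => [k [n [E [sE [cE <-]]]]|].
  by rewrite -cE; apply: thickness_growth; rewrite ?cE.
by apply: Rmult_le_pos => //; apply/Rlt_le/exp_pos.
Qed.
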